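(* The metric $g$ is Killing (i.e. $\mathrm{Ad}$-invariant: $g([x,y],z)=g(x,[y,z])$ for all $x,y,z\in\mathfrak l$) if and only if $(L,\varphi,\xi,\eta,g)$ belongs to $\mathcal{F}_8\oplus\mathcal{F}_{10}$ with $2\lambda=-\nu$, where $\lambda=F_{101}$ and $\nu=F_{011}$. Equivalently, $g$ is Killing iff $C_{12}^0=-C_{01}^2=-C_{02}^1$ and all other $C_{ij}^k$ ($i<j$) vanish.
   Context: Let $L$ be a 3-dimensional real connected Lie group with Lie algebra $\mathfrak l$, and let $\{E_0,E_1,E_2\}$ be a basis of left-invariant vector fields, with $[E_i,E_j]=C_{ij}^kE_k$. Define the left-invariant almost contact structure $(\varphi,\xi,\eta)$ by $\varphi E_0=0$, $\varphi E_1=E_2$, $\varphi E_2=-E_1$, $\xi=E_0$, $\eta(E_0)=1$, $\eta(E_1)=\eta(E_2)=0$, and the left-invariant pseudo-Riemannian metric $g$ by $g(E_0,E_0)=g(E_1,E_1)=-g(E_2,E_2)=1$, $g(E_i,E_j)=0$ for $i\neq j$. Let $\nabla$ be the Levi-Civita connection of $g$, $F(x,y,z)=g((\nabla_x\varphi)y,z)$, and $F_{ijk}=F(E_i,E_j,E_k)$. The manifold belongs to $\mathcal{F}_8$ iff all $F_{ijk}$ vanish except possibly $F_{101}=F_{110}=F_{202}=F_{220}=:\lambda$; to $\mathcal{F}_{10}$ iff all vanish except possibly $F_{011}=F_{022}=:\nu$; it belongs to $\mathcal{F}_8\oplus\mathcal{F}_{10}$ iff $F$ is the sum of a tensor of the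 $\mathcal{F}_8$ form and a tensor of the $\mathcal{F}_{10}$ form, i.e. all $F_{ijk}$ vanish except possibly $F_{101}=F_{110}=F_{202}=F_{220}=\lambda$ and $F_{011}=F_{022}=\nu$. *)

From Stdlib Require Import Reals.
Open Scope R_scope.

Inductive idx : Set := i0 | i1 | i2.

Definition idx_eqb (a b : idx) : bool :=
  match a, b with
  | i0, i0 | i1, i1 | i2, i2 => true
  | _, _ => false
  end.

Definition sum3 (f : idx -> R) : R := f i0 + f i1 + f i2.

(* Elements of l, written in coordinates w.r.t. {E_0,E_1,E_2}. *)
Definition vec := idx -> R.

Definition E (i : idx) : vec := fun j => if idx_eqb i j then 1 else 0.

(* Structure constants: C i j k = C_{ij}^k, i.e. [E_i,E_j] = sum_k C_{ij}^k E_k. *)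
Definition structure_constants := idx -> idx -> idx -> R.

Definition is_lie_algebra (C : structure_constants) : Prop :=
  (forall i j k, C i j k = - C j i k) /\
  (forall i j k m,
     sum3 (fun l => C i j l * C l k m + C j k l * C l i m + C k i l * C l j m) = 0).

Definition br (C : structure_constants) (x y : vec) : vec :=
  fun k => sum3 (fun i => sum3 (fun j => x i * y j * C i j k)).

Definition eps (i : idx) : R := match i with i0 => 1 | i1 => 1 | i2 => -1 end.
Definition g (x y : vec) : R := sum3 (fun i => eps i * x i * y i).

Definition phi (x : vec) : vec :=
  fun k => match k with i0 => 0 | i1 => - x i2 | i2 => x i1 end.
Definition xi : vec := E i0.
Definition eta (x : vec) : R := x i0.

(* Levi-Civita connection of the left-invariant metric g on left-invariant
   vector fields, given by the Koszul formula
   2 g(nabla_x y, z) = g([x,y],z) - g([y,z],x) + g([z,x],y),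
   and raised with g^{-1} = diag(eps). *)
Definition nabla (C : structure_constants) (x y : vec) : vec :=
  fun k => eps k * / 2 *
    (g (br C x y) (E k) - g (br C y (E k)) x + g (br C (E k) x) y).

Definition vsub (x y : vec) : vec := fun k => x k - y k.

(* F(x,y,z) = g((nabla_x phi) y, z). *)
Definition Ften (C : structure_constants) (x y z : vec) : R :=
  g (vsub (nabla C x (phi y)) (phi (nabla C x y))) z.

Definition Fc (C : structure_constants) (i j k : idx) : R :=
  Ften C (E i) (E j) (E k).

Definition F8F10_form (lam nu : R) (i j k : idx) : R :=
  match i, j, k with
  | i1, i0, i1 | i1, i1, i0 | i2, i0, i2 | i2, i2, i0 => lam
  | i0, i1, i1 | i0, i2, i2 => nu
  | _, _, _ => 0
  end.

Definition killing (C : structure_constants) : Prop :=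
  forall x y z : vec, g (br C x y) z = g x (br C y z).

(* Antisymmetry leaves nine independent structure constants C_{01}^k, C_{02}^k,
   C_{12}^k.  Writing g([x,y],z) and g(x,[y,z]) as trilinear forms, g is Killing
   iff eps_k C_{ij}^k = eps_i C_{jk}^i on the basis, which amounts to eight linear
   conditions on the nine constants.  The Koszul formula makes every F_{ijk}
   linear in the constants as well; reading off the table of F shows that the
   F_8 (+) F_10 shape with 2 lambda = - nu is the same eight conditions. *)

From Stdlib Require Import Reals Lra FunctionalExtensionality.
Open Scope R_scope.

Definition vec3 (a b c : R) : vec :=
  fun l => match l with i0 => a | i1 => b | i2 => c end.

(* [a b c], [d e f], [p q r] are the coordinates of [E0,E1], [E0,E2], [E1,E2]. *)
Definition skew_sc (a b c d e f p q r : R) : structure_constants := fun i j =>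
  match i, j with
  | i0, i1 => vec3 a b c | i1, i0 => vec3 (-a) (-b) (-c)
  | i0, i2 => vec3 d e f | i2, i0 => vec3 (-d) (-e) (-f)
  | i1, i2 => vec3 p q r | i2, i1 => vec3 (-p) (-q) (-r)
  | _, _ => vec3 0 0 0
  end.

Lemma skew_sc_eta (C : structure_constants) :
  (forall i j k, C i j k = - C j i k) ->
  C = skew_sc (C i0 i1 i0) (C i0 i1 i1) (C i0 i1 i2) (C i0 i2 i0) (C i0 i2 i1)
              (C i0 i2 i2) (C i1 i2 i0) (C i1 i2 i1) (C i1 i2 i2).
Proof.
  intros HA.
  assert (Hdiag : forall i k, C i i k = 0) by (intros i k; pose proof (HA i i k); lra).
  apply functional_extensionality; intros i.
  apply functional_extensionality; intros j.
  apply functional_extensionality; intros k.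
  destruct i, j, k; cbv [skew_sc vec3]; first [reflexivity | apply HA | apply Hdiag].
Qed.

Lemma sum3_ext (f f' : idx -> R) : (forall i, f i = f' i) -> sum3 f = sum3 f'.
Proof. intros H; unfold sum3; rewrite !H; reflexivity. Qed.

Lemma g_br_l (C : structure_constants) (x y z : vec) :
  g (br C x y) z =
  sum3 (fun i => sum3 (fun j => sum3 (fun k => x i * y j * z k * (eps k * C i j k)))).
Proof. cbv [g br sum3]; ring. Qed.

Lemma g_br_r (C : structure_constants) (x y z : vec) :
  g x (br C y z) =
  sum3 (fun i => sum3 (fun j => sum3 (fun k => x i * y j * z k * (eps i * C j k i)))).
Proof. cbv [g br sum3]; ring. Qed.

Lemma killing_iff_sc (C : structure_constants) :
  killing C <-> forall i j k, eps k * C i j k = eps i * C j k i.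
Proof.
  split.
  - intros H i j k; specialize (H (E i) (E j) (E k)).
    rewrite g_br_l, g_br_r in H.
    destruct i, j, k; cbv [sum3 E idx_eqb eps] in H |- *; lra.
  - intros H x y z; rewrite g_br_l, g_br_r.
    apply sum3_ext; intros i; apply sum3_ext; intros j; apply sum3_ext; intros k.
    rewrite H; reflexivity.
Qed.

Definition killing_conditions (C : structure_constants) : Prop :=
  C i1 i2 i0 = - C i0 i1 i2 /\ C i1 i2 i0 = - C i0 i2 i1 /\
  C i0 i1 i0 = 0 /\ C i0 i1 i1 = 0 /\
  C i0 i2 i0 = 0 /\ C i0 i2 i2 = 0 /\
  C i1 i2 i1 = 0 /\ C i1 i2 i2 = 0.

Definition in_F8F10_2lam_nu (C : structure_constants) : Prop :=
  (forall i j k, Fc C i j k = F8F10_form (Fc C i1 i0 i1) (Fc C i0 i1 i1) i j k)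
  /\ 2 * Fc C i1 i0 i1 = - Fc C i0 i1 i1.

Section NineConstants.

Variables a b c d e f p q r : R.

Let Cs := skew_sc a b c d e f p q r.

Lemma skew_sc_ad_invariant_iff :
  (forall i j k, eps k * Cs i j k = eps i * Cs j k i) <-> killing_conditions Cs.
Proof.
  unfold killing_conditions, Cs; cbv [skew_sc vec3]; split.
  - intros H.
    pose proof (H i0 i1 i0). pose proof (H i0 i1 i1). pose proof (H i0 i2 i0).
    pose proof (H i0 i2 i2). pose proof (H i1 i2 i1). pose proof (H i1 i2 i2).
    pose proof (H i0 i1 i2). pose proof (H i0 i2 i1).
    cbv [eps] in *; lra.
  - intros Hc i j k; destruct i, j, k; cbv [eps]; lra.
Qed.

Definition F_coeffs (i j k : idx) : R :=
  match i, j, k with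
  | i0, i0, i1 => d | i0, i0, i2 => -a | i0, i1, i0 => d | i0, i1, i1 => c + e + p
  | i0, i2, i0 => -a | i0, i2, i2 => c + e + p
  | i1, i0, i1 => (-c + e + p) / 2 | i1, i0, i2 => -b | i1, i1, i0 => (-c + e + p) / 2
  | i1, i1, i1 => 2 * q | i1, i2, i0 => -b | i1, i2, i2 => 2 * q
  | i2, i0, i1 => -f | i2, i0, i2 => (c - e + p) / 2 | i2, i1, i0 => -f
  | i2, i1, i1 => -2 * r | i2, i2, i0 => (c - e + p) / 2 | i2, i2, i2 => -2 * r
  | _, _, _ => 0
  end.

Lemma Fc_skew_sc (i j k : idx) : Fc Cs i j k = F_coeffs i j k.
Proof.
  unfold Cs; destruct i, j, k;
    cbv [skew_sc vec3 Fc Ften g br sum3 E nabla vsub phi eps idx_eqb F_coeffs]; field.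
Qed.

Lemma skew_sc_F8F10_iff : in_F8F10_2lam_nu Cs <-> killing_conditions Cs.
Proof.
  unfold in_F8F10_2lam_nu, killing_conditions; rewrite !Fc_skew_sc; split.
  - intros [H Hlam].
    pose proof (H i0 i0 i1). pose proof (H i0 i0 i2). pose proof (H i1 i0 i2).
    pose proof (H i1 i1 i1). pose proof (H i2 i0 i1). pose proof (H i2 i1 i1).
    pose proof (H i2 i0 i2).
    rewrite !Fc_skew_sc in *; unfold Cs in *; cbv [skew_sc vec3 F_coeffs F8F10_form] in *.
    lra.
  - intros Hc; unfold Cs in Hc; cbv [skew_sc vec3] in Hc; split.
    + intros i j k; rewrite Fc_skew_sc; destruct i, j, k; cbv [F_coeffs F8F10_form]; lra.
    + cbv [F_coeffs]; lra.
Qed.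

End NineConstants.

Theorem theorem2p2 (C : structure_constants) (HC : is_lie_algebra C) :
  (killing C <->
     ((forall i j k, Fc C i j k = F8F10_form (Fc C i1 i0 i1) (Fc C i0 i1 i1) i j k)
      /\ 2 * Fc C i1 i0 i1 = - Fc C i0 i1 i1))
  /\
  (killing C <->
     (C i1 i2 i0 = - C i0 i1 i2 /\ C i1 i2 i0 = - C i0 i2 i1 /\
      C i0 i1 i0 = 0 /\ C i0 i1 i1 = 0 /\
      C i0 i2 i0 = 0 /\ C i0 i2 i2 = 0 /\
      C i1 i2 i1 = 0 /\ C i1 i2 i2 = 0)).
Proof.
  destruct HC as [HA _].
  change ((killing C <-> in_F8F10_2lam_nu C) /\ (killing C <-> killing_conditions C)).
  rewrite killing_iff_sc, (skew_sc_eta C HA).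
  rewrite skew_sc_ad_invariant_iff, skew_sc_F8F10_iff.
  tauto.
Qed.
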